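(* Let $(X,\rho)$ be a compact metric space with at least two points and let $T\colon X\to X$ be continuous and topologically weakly mixing. There exist numbers $\delta_d\in(0,1)$, $d\ge2$, and a Mycielski set $M\subset X$ such that for every $d\ge2$, all pairwise distinct $x_1,\dots,x_d\in M$ and all integers $s_1,\dots,s_d\ge0$, the $d$-tuple $(T^{s_1}x_1,\dots,T^{s_d}x_d)$ is $\delta_d$-Li-Yorke. Moreover $\omega(x,T)=X$ for every $x\in M$.
   Context: $T$ is topologically weakly mixing if $T\times T$ is topologically transitive. A Mycielski set is a countable union of Cantor sets. A $d$-tuple is $\delta$-Li-Yorke if $\liminf_n\max_{i,j}\rho(T^nx_i,T^nx_j)=0$ and $\limsup_n\min_{i\ne j}\rho(T^nx_i,T^nx_j)>\delta$. $\omega(x,T)$ is the $\omega$-limit set of $x$. *)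

From Stdlib Require Import Reals.
Open Scope R_scope.

Definition is_metric {X : Type} (rho : X -> X -> R) : Prop :=
  (forall x y, rho x y = 0 <-> x = y) /\
  (forall x y, rho x y = rho y x) /\
  (forall x y z, rho x z <= rho x y + rho y z).

Definition open_set {X : Type} (rho : X -> X -> R) (U : X -> Prop) : Prop :=
  forall x, U x -> exists eps, eps > 0 /\ forall y, rho x y < eps -> U y.

Definition compact_space {X : Type} (rho : X -> X -> R) : Prop :=
  forall (I : Type) (U : I -> X -> Prop),
    (forall i, open_set rho (U i)) ->
    (forall x, exists i, U i x) ->
    exists l : list I, forall x, exists i, List.In i l /\ U i x.

Definition continuous_map {X : Type} (rho : X -> X -> R) (T : X -> X) : Prop :=
  forall x eps, eps > 0 -> exists del, del > 0 /\
    forall y, rho x y < del -> rho (T x) (T y) < eps.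

Definition prod_dist {X : Type} (rho : X -> X -> R) (p q : X * X) : R :=
  Rmax (rho (fst p) (fst q)) (rho (snd p) (snd q)).

Definition prod_map {X : Type} (T : X -> X) (p : X * X) : X * X :=
  (T (fst p), T (snd p)).

Definition top_transitive {Y : Type} (dist : Y -> Y -> R) (S : Y -> Y) : Prop :=
  forall U V : Y -> Prop,
    open_set dist U -> open_set dist V ->
    (exists u, U u) -> (exists v, V v) ->
    exists n : nat, (0 < n)%nat /\ exists u, U u /\ V (Nat.iter n S u).

Definition weakly_mixing {X : Type} (rho : X -> X -> R) (T : X -> X) : Prop :=
  top_transitive (prod_dist rho) (prod_map T).

(* Cantor space {0,1}^N; continuity w.r.t. the product topology *)
Definition cantor_continuous {X : Type} (rho : X -> X -> R)
  (f : (nat -> bool) -> X) : Prop :=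
  forall (a : nat -> bool) eps, eps > 0 -> exists N : nat,
    forall b : nat -> bool, (forall k, (k < N)%nat -> b k = a k) ->
      rho (f a) (f b) < eps.

(* C is a Cantor set: C is the image of a continuous injection of the Cantor
   space {0,1}^N (hence homeomorphic to it, since {0,1}^N is compact and X
   is Hausdorff). *)
Definition cantor_set {X : Type} (rho : X -> X -> R) (C : X -> Prop) : Prop :=
  exists f : (nat -> bool) -> X,
    cantor_continuous rho f /\
    (forall a b, f a = f b -> a = b) /\
    (forall x, C x <-> exists a, f a = x).

Definition mycielski_set {X : Type} (rho : X -> X -> R) (M : X -> Prop) : Prop :=
  exists C : nat -> X -> Prop,
    (forall k, cantor_set rho (C k)) /\
    (forall x, M x <-> exists k, C k x).

(* the d-tuple (y_0, ..., y_{d-1}) is delta-Li-Yorke: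
   liminf_n max_{i,j} rho(T^n y_i, T^n y_j) = 0 and
   limsup_n min_{i<>j} rho(T^n y_i, T^n y_j) > delta *)
Definition li_yorke_tuple {X : Type} (rho : X -> X -> R) (T : X -> X)
  (delta : R) (d : nat) (y : nat -> X) : Prop :=
  (forall eps, eps > 0 -> forall N : nat, exists n, (N <= n)%nat /\
     forall i j, (i < d)%nat -> (j < d)%nat ->
       rho (Nat.iter n T (y i)) (Nat.iter n T (y j)) < eps) /\
  (exists delta', delta' > delta /\ forall N : nat, exists n, (N <= n)%nat /\
     forall i j, (i < d)%nat -> (j < d)%nat -> i <> j ->
       rho (Nat.iter n T (y i)) (Nat.iter n T (y j)) > delta').

Definition in_omega_limit {X : Type} (rho : X -> X -> R) (T : X -> X)
  (x y : X) : Prop :=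
  forall eps, eps > 0 -> forall N : nat, exists n, (N <= n)%nat /\
    rho (Nat.iter n T x) y < eps.

(* The set M is a single Cantor set, the set of intersection points of a scheme of nested
   balls indexed by binary words. Fix a dense sequence G. A requirement consists of a horizon N
   and, for each word w of length N, a shift s_w and a target index t_w; it asks for a time
   n >= N at which T^(n + s_w) maps the ball of every branch through w into the
   2^-N-neighbourhood of G(t_w). There are countably many requirements; enumerate them so that
   each one comes up at a stage beyond its horizon, and at that stage shrink all balls of the
   scheme to meet it. This is possible because weak mixing lets finitely many pairs of nonempty
   open sets be hit at a common, arbitrarily large time. Distinct points of M lie on distinct
   branches, separated by their words at a large horizon, so their shifted orbits can be sent
   simultaneously near one point (proximality), near pairwise distant points (separation), or
   near any given point (omega(x, T) = X). *)

From Stdlib Require Import Reals Lra Lia List Classical ClassicalEpsilon FunctionalExtensionality.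
From Stdlib Require Import Arith.Cantor Arith.Wf_nat.
Import ListNotations.
Open Scope R_scope.

Definition agree (k : nat) (a b : nat -> bool) : Prop := forall i, (i < k)%nat -> a i = b i.

Lemma agree_le k k' a b : (k' <= k)%nat -> agree k a b -> agree k' a b.
Proof. intros Hk H i Hi. apply H. lia. Qed.

Lemma agree_sym k a b : agree k a b -> agree k b a.
Proof. intros H i Hi. symmetry. auto. Qed.

Definition truncate (k : nat) (a : nat -> bool) : nat -> bool :=
  fun i => if Nat.ltb i k then a i else false.

Lemma agree_truncate k a : agree k (truncate k a) a.
Proof. intros i Hi. unfold truncate. destruct (Nat.ltb_spec i k); [reflexivity | lia]. Qed.

Lemma truncate_agree k a b : agree k a b -> truncate k a = truncate k b.
Proof.
  intros H. apply functional_extensionality. intros i. unfold truncate.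
  destruct (Nat.ltb_spec i k); auto.
Qed.

Fixpoint words (k : nat) : list (nat -> bool) :=
  match k with
  | O => [fun _ => false]
  | S k => flat_map (fun w => [fun i => if Nat.eqb i k then false else w i;
                               fun i => if Nat.eqb i k then true else w i]) (words k)
  end.

Lemma truncate_in_words k a : In (truncate k a) (words k).
Proof.
  induction k as [|k IH].
  - left. apply functional_extensionality. reflexivity.
  - apply in_flat_map. exists (truncate k a). split; [exact IH|].
    assert (E : truncate (S k) a = fun i => if Nat.eqb i k then a k else truncate k a i).
    { apply functional_extensionality. intros i. unfold truncate.
      destruct (Nat.eqb_spec i k) as [->|Hik].
      - rewrite (proj2 (Nat.ltb_lt k (S k))) by lia. reflexivity.
      - destruct (Nat.ltb_spec i (S k)), (Nat.ltb_spec i k); auto; lia. }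
    rewrite E. destruct (a k); simpl; auto.
Qed.

Lemma prefix_choice {A : Type} k (P : (nat -> bool) -> A -> Prop) :
  (forall a, exists x, P a x) ->
  (forall a b x, agree k a b -> P a x -> P b x) ->
  exists F : (nat -> bool) -> A, (forall a, P a (F a)) /\
    forall a b, agree k a b -> F a = F b.
Proof.
  intros Hex Hinv. destruct (choice P Hex) as [F0 HF0].
  exists (fun a => F0 (truncate k a)). split.
  - intros a. apply (Hinv (truncate k a)); [apply agree_truncate | apply HF0].
  - intros a b Hab. now rewrite (truncate_agree k a b Hab).
Qed.

Lemma first_difference (a b : nat -> bool) : a <> b -> exists k, agree k a b /\ a k <> b k.
Proof.
  intros Hab.
  assert (Hi : exists i, a i <> b i).
  { apply not_all_ex_not. intros H. apply Hab, functional_extensionality, H. }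
  destruct Hi as [i Hi]. induction i as [i IH] using lt_wf_ind.
  destruct (classic (agree i a b)) as [H|H]; [eauto|].
  apply not_all_ex_not in H. destruct H as [j Hj].
  apply imply_to_and in Hj. destruct Hj as [Hji Hj]. eapply IH; eauto.
Qed.

Fixpoint code (a : nat -> bool) (k : nat) : nat :=
  match k with
  | O => O
  | S k => (code a k + (if a k then 2 ^ k else 0))%nat
  end.

Lemma code_lt a k : (code a k < 2 ^ k)%nat.
Proof. induction k; simpl; [lia|]. destruct (a k); lia. Qed.

Lemma code_agree a b k : agree k a b -> code a k = code b k.
Proof.
  induction k as [|k IH]; intros H; simpl; auto.
  rewrite IH by (apply (agree_le (S k)); auto). rewrite (H k) by lia. reflexivity.
Qed.

Lemma code_inj a b k : code a k = code b k -> agree k a b.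
Proof.
  induction k as [|k IH]; intros H; simpl in H.
  - intros i Hi; lia.
  - pose proof (code_lt a k). pose proof (code_lt b k).
    assert (E : a k = b k) by (destruct (a k), (b k); auto; lia).
    rewrite E in H. intros i Hi. destruct (Nat.eq_dec i k) as [->|Hik]; auto.
    apply IH; lia.
Qed.

Lemma eventually_all {A : Type} (l : list A) (P : A -> nat -> Prop) :
  (forall x, In x l -> exists n, forall m, (n <= m)%nat -> P x m) ->
  exists n, forall m, (n <= m)%nat -> forall x, In x l -> P x m.
Proof.
  induction l as [|x l IH]; intros H.
  - exists O. intros m _ x [].
  - destruct (H x (or_introl eq_refl)) as [n1 Hn1].
    destruct IH as [n2 Hn2]; [intros y Hy; apply H; now right|].
    exists (Nat.max n1 n2). intros m Hm y [<-|Hy]; [apply Hn1 | apply Hn2]; auto; lia.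
Qed.

Lemma eventually_pairwise d (P : nat -> nat -> nat -> Prop) :
  (forall i j, (i < d)%nat -> (j < d)%nat -> i <> j ->
     exists n, forall m, (n <= m)%nat -> P i j m) ->
  exists n, forall m, (n <= m)%nat -> forall i j, (i < d)%nat -> (j < d)%nat -> i <> j ->
    P i j m.
Proof.
  intros H.
  destruct (eventually_all (list_prod (seq 0 d) (seq 0 d))
              (fun p m => fst p <> snd p -> P (fst p) (snd p) m)) as [n Hn].
  - intros [i j] Hp. apply in_prod_iff in Hp. destruct Hp as [Hi Hj].
    apply in_seq in Hi, Hj. simpl.
    destruct (Nat.eq_dec i j) as [->|Hij]; [exists O; tauto|].
    destruct (H i j) as [n Hn]; try lia; auto. exists n. auto.
  - exists n. intros m Hm i j Hi Hj Hij.
    apply (Hn m Hm (i, j)); auto. apply in_prod; apply in_seq; lia.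
Qed.

Lemma codes_eventually_distinct (af : nat -> nat -> bool) d :
  (forall i j, (i < d)%nat -> (j < d)%nat -> i <> j -> af i <> af j) ->
  exists L, forall N, (L <= N)%nat -> forall i j, (i < d)%nat -> (j < d)%nat -> i <> j ->
    code (af i) N <> code (af j) N.
Proof.
  intros Hdist. apply eventually_pairwise. intros i j Hi Hj Hij.
  destruct (first_difference (af i) (af j) (Hdist i j Hi Hj Hij)) as [k [_ Hk]].
  exists (S k). intros N HN Hcode. apply Hk. apply (code_inj _ _ N Hcode). lia.
Qed.

Lemma table_through_injective {B : Type} (c : nat -> nat) (v : nat -> B) d :
  (forall i j, (i < d)%nat -> (j < d)%nat -> i <> j -> c i <> c j) ->
  exists h : nat -> B, forall i, (i < d)%nat -> h (c i) = v i.
Proof.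
  induction d as [|d IH]; intros Hinj.
  - exists v. intros i Hi. lia.
  - destruct IH as [h Hh]; [intros i j Hi Hj; apply Hinj; lia|].
    exists (fun x => if Nat.eqb x (c d) then v d else h x). intros i Hi.
    destruct (Nat.eq_dec i d) as [->|Hid]; [now rewrite Nat.eqb_refl|].
    destruct (Nat.eqb_spec (c i) (c d)) as [E|_]; [exfalso; revert E; apply Hinj; lia|].
    apply Hh. lia.
Qed.

Lemma dependent_choice {A : Type} (P : nat -> A -> Prop) (Rel : nat -> A -> A -> Prop) (x0 : A) :
  P O x0 -> (forall k x, P k x -> exists y, P (S k) y /\ Rel k x y) ->
  exists f : nat -> A, f O = x0 /\ forall k, P k (f k) /\ Rel k (f k) (f (S k)).
Proof.
  intros H0 Hstep.
  assert (Hex : forall kx : nat * A, exists y, P (fst kx) (snd kx) ->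
                  P (S (fst kx)) y /\ Rel (fst kx) (snd kx) y).
  { intros [k x]. destruct (classic (P k x)) as [Hk|Hk].
    - destruct (Hstep k x Hk) as [y Hy]. eauto.
    - exists x. tauto. }
  destruct (choice _ Hex) as [next Hnext].
  set (f := fix f k := match k with O => x0 | S k => next (k, f k) end).
  assert (Hf : forall k, P k (f k)).
  { induction k; [exact H0 | apply (Hnext (k, f k)); exact IHk]. }
  exists f. split; [reflexivity|]. intros k. split; [apply Hf|].
  apply (Hnext (k, f k)). apply Hf.
Qed.

Lemma pow_half_eventually_lt e : 0 < e -> exists n, forall m, (n <= m)%nat -> (/2) ^ m < e.
Proof.
  intros He. destruct (pow_lt_1_zero (/2)) with (y := e) as [N HN]; auto.
  { rewrite Rabs_pos_eq; lra. }
  exists N. intros m Hm. specialize (HN m Hm). rewrite Rabs_pos_eq in HN; auto.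
  apply pow_le. lra.
Qed.

Record requirement := Requirement { horizon : nat; table : nat -> nat * nat }.

Definition demand (r : requirement) (a : nat -> bool) : nat * nat :=
  table r (code a (horizon r)).

(* [stream_nth p] reads a nat as the infinite sequence coded by iterated Cantor pairing. *)
Definition stream_nth (p c : nat) : nat := fst (of_nat (Nat.iter c (fun q => snd (of_nat q)) p)).

Lemma stream_nth_realizes (v : nat -> nat) m :
  exists p, forall c, (c < m)%nat -> stream_nth p c = v c.
Proof.
  revert v. induction m as [|m IH]; intros v; [exists O; intros; lia|].
  destruct (IH (fun c => v (S c))) as [p Hp].
  exists (to_nat (v O, p)). intros [|c] Hc; unfold stream_nth.
  - change (fst (of_nat (to_nat (v O, p))) = v O). now rewrite cancel_of_to.
  - rewrite Nat.iter_succ_r. cbv beta. rewrite cancel_of_to. apply Hp. lia.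
Qed.

Definition enum_req (k : nat) : requirement :=
  let (N, p) := of_nat (fst (of_nat k)) in
  Requirement N (fun c => of_nat (stream_nth p c)).

Lemma enum_req_complete N (h : nat -> nat * nat) :
  exists k, (N <= k)%nat /\ horizon (enum_req k) = N /\
    forall c, (c < 2 ^ N)%nat -> table (enum_req k) c = h c.
Proof.
  destruct (stream_nth_realizes (fun c => to_nat (h c)) (2 ^ N)) as [p Hp].
  exists (to_nat (to_nat (N, p), N)).
  pose proof (to_nat_non_decreasing (to_nat (N, p)) N).
  unfold enum_req. rewrite cancel_of_to. cbn [fst]. rewrite cancel_of_to.
  split; [lia | split; [reflexivity|]].
  intros c Hc. cbn [table]. now rewrite Hp, cancel_of_to.
Qed.

Section Construction.

Variables (X : Type) (rho : X -> X -> R) (T : X -> X).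
Hypothesis Hmetric : is_metric rho.

Lemma rho_refl x : rho x x = 0.
Proof. destruct Hmetric as [H _]. now apply H. Qed.

Lemma rho_sym x y : rho x y = rho y x.
Proof. destruct Hmetric as [_ [H _]]. apply H. Qed.

Lemma rho_tri x y z : rho x z <= rho x y + rho y z.
Proof. destruct Hmetric as [_ [_ H]]. apply H. Qed.

Lemma rho_nonneg x y : 0 <= rho x y.
Proof. pose proof (rho_tri x y x) as Hxyx. rewrite rho_refl, (rho_sym y x) in Hxyx. lra. Qed.

Lemma rho_pos x y : x <> y -> 0 < rho x y.
Proof.
  intros Hxy. destruct (Rle_lt_or_eq_dec 0 (rho x y) (rho_nonneg x y)) as [H|H]; auto.
  exfalso. apply Hxy. destruct Hmetric as [Hd _]. apply Hd. auto.
Qed.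

Lemma open_ball c r : open_set rho (fun y => rho c y < r).
Proof.
  intros x Hx. exists (r - rho c x). split; [lra|].
  intros y Hy. pose proof (rho_tri c x y). lra.
Qed.

Lemma open_outside_ball c r : open_set rho (fun y => r < rho c y).
Proof.
  intros x Hx. exists (rho c x - r). split; [lra|].
  intros y Hy. pose proof (rho_tri c y x) as Htri. rewrite (rho_sym y x) in Htri. lra.
Qed.

Lemma open_and U V : open_set rho U -> open_set rho V -> open_set rho (fun y => U y /\ V y).
Proof.
  intros HU HV x [Ux Vx]. destruct (HU _ Ux) as [e1 [He1 H1]], (HV _ Vx) as [e2 [He2 H2]].
  exists (Rmin e1 e2). split; [now apply Rmin_pos|].
  intros y Hy. pose proof (Rmin_l e1 e2). pose proof (Rmin_r e1 e2).
  split; [apply H1 | apply H2]; lra.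
Qed.

Record ball := Ball { center : X; radius : R }.

Definition in_ball (B : ball) (y : X) : Prop := rho (center B) y < radius B.

Definition subball (B B' : ball) : Prop :=
  0 < radius B' /\ rho (center B) (center B') + radius B' < radius B /\
  radius B' <= radius B / 2.

Lemma in_subball B B' y : subball B B' -> in_ball B' y -> in_ball B y.
Proof.
  unfold in_ball. intros [_ [H _]] Hy. pose proof (rho_tri (center B) (center B') y). lra.
Qed.

Lemma subball_trans B1 B2 B3 : subball B1 B2 -> subball B2 B3 -> subball B1 B3.
Proof.
  intros [P2 [D2 R2]] [P3 [D3 R3]].
  pose proof (rho_tri (center B1) (center B2) (center B3)). split; [|split]; lra.
Qed.

Lemma subball_at B u (W : X -> Prop) :
  open_set rho W -> in_ball B u -> W u ->
  exists B', center B' = u /\ subball B B' /\ forall y, in_ball B' y -> W y.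
Proof.
  unfold in_ball. intros HW Hu Wu. destruct (HW u Wu) as [e [He HWe]].
  pose proof (Rmin_l e (Rmin ((radius B - rho (center B) u) / 2) (radius B / 2))).
  pose proof (Rmin_r e (Rmin ((radius B - rho (center B) u) / 2) (radius B / 2))).
  pose proof (Rmin_l ((radius B - rho (center B) u) / 2) (radius B / 2)).
  pose proof (Rmin_r ((radius B - rho (center B) u) / 2) (radius B / 2)).
  pose proof (rho_nonneg (center B) u).
  set (r := Rmin e (Rmin ((radius B - rho (center B) u) / 2) (radius B / 2))) in *.
  assert (Hr : 0 < r) by (repeat apply Rmin_pos; lra).
  exists (Ball u r). unfold subball, in_ball; simpl.
  split; [reflexivity|]. split; [split; [|split]; lra|].
  intros y Hy. apply HWe. lra.
Qed.

Definition dense (G : nat -> X) : Prop := forall y e, 0 < e -> exists j, rho (G j) y < e.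

Hypothesis Hcompact : compact_space rho.

Lemma nested_balls_meet (B : nat -> ball) :
  (forall k, subball (B k) (B (S k))) -> exists y, forall k, in_ball (B k) y.
Proof.
  (* The closed ball of [B (S k)] lies in [B k], so otherwise the complements of these
     closed balls would be an open cover of [X] without finite subcover. *)
  intros Hsub.
  assert (Hchain : forall j m, (j < m)%nat -> subball (B j) (B m)).
  { intros j m Hjm. induction Hjm; [apply Hsub | eapply subball_trans; eauto]. }
  apply NNPP. intros Hnone.
  destruct (Hcompact nat (fun k y => radius (B (S k)) < rho (center (B (S k))) y)) as [l Hl].
  - intros k. apply open_outside_ball.
  - intros y. apply NNPP. intros Hy. apply Hnone. exists y. intros k.
    assert (Hle : rho (center (B (S k))) y <= radius (B (S k))) by (apply Rnot_lt_le; eauto).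
    destruct (Hsub k) as [_ [Hk _]]. unfold in_ball.
    pose proof (rho_tri (center (B k)) (center (B (S k))) y). lra.
  - set (K := list_max l).
    destruct (Hl (center (B (S K)))) as [k [Hk Hout]].
    assert (HkK : (k <= K)%nat).
    { assert (HF : Forall (fun k => (k <= K)%nat) l) by (apply list_max_le; lia).
      rewrite Forall_forall in HF. auto. }
    destruct (Nat.eq_dec k K) as [->|HkK'].
    + rewrite rho_refl in Hout. destruct (Hsub K) as [HK _]. lra.
    + destruct (Hchain (S k) (S K)) as [HK [Hd _]]; [lia|].
      pose proof (rho_nonneg (center (B (S k))) (center (B (S K)))). lra.
Qed.

Lemma finite_net e : 0 < e -> exists l : list X, forall x, exists y, In y l /\ rho y x < e.
Proof.
  intros He. destruct (Hcompact X (fun y x => rho y x < e)) as [l Hl].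
  - intros y. apply open_ball.
  - intros x. exists x. rewrite rho_refl. exact He.
  - exists l. exact Hl.
Qed.

Lemma dense_sequence (x0 : X) : exists G : nat -> X, dense G.
Proof.
  assert (Hnet : forall m, exists l : list X, forall x, exists y, In y l /\ rho y x < (/2) ^ m).
  { intros m. apply finite_net. apply pow_lt. lra. }
  destruct (choice _ Hnet) as [net Hnet'].
  exists (fun j => nth (snd (of_nat j)) (net (fst (of_nat j))) x0).
  intros y e He. destruct (pow_half_eventually_lt e He) as [m Hm].
  destruct (Hnet' m y) as [y' [Hy' Hyy']]. destruct (In_nth _ _ x0 Hy') as [i [_ Hi]].
  exists (to_nat (m, i)). rewrite cancel_of_to. cbn [fst snd]. rewrite Hi.
  specialize (Hm m (le_n m)). lra.
Qed.

Hypothesis Hcont : continuous_map rho T.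
Hypothesis Hwm : weakly_mixing rho T.
Hypothesis Htwo : exists a b : X, a <> b.

Definition nonempty_open (U : X -> Prop) : Prop := open_set rho U /\ exists u, U u.

Definition hits (n : nat) (U V : X -> Prop) : Prop := exists u, U u /\ V (Nat.iter n T u).

Lemma open_preimage_iter n V : open_set rho V -> open_set rho (fun y => V (Nat.iter n T y)).
Proof.
  intros HV. induction n as [|n IH]; [exact HV|].
  intros x Hx. destruct (IH (T x)) as [e [He HTe]].
  { now rewrite <- Nat.iter_succ_r. }
  destruct (Hcont x e He) as [del [Hdel Hx']].
  exists del. split; [exact Hdel|]. intros y Hy. rewrite Nat.iter_succ_r. auto.
Qed.

Lemma open_prod U V :
  open_set rho U -> open_set rho V -> open_set (prod_dist rho) (fun p => U (fst p) /\ V (snd p)).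
Proof.
  intros HU HV p [Up Vp]. destruct (HU _ Up) as [e1 [He1 H1]], (HV _ Vp) as [e2 [He2 H2]].
  exists (Rmin e1 e2). split; [now apply Rmin_pos|]. intros q Hq. unfold prod_dist in Hq.
  pose proof (Rmax_l (rho (fst p) (fst q)) (rho (snd p) (snd q))).
  pose proof (Rmax_r (rho (fst p) (fst q)) (rho (snd p) (snd q))).
  pose proof (Rmin_l e1 e2). pose proof (Rmin_r e1 e2).
  split; [apply H1 | apply H2]; lra.
Qed.

Lemma iter_prod_map n p :
  Nat.iter n (prod_map T) p = (Nat.iter n T (fst p), Nat.iter n T (snd p)).
Proof. induction n as [|n IH]; simpl; [now destruct p | now rewrite IH]. Qed.

Lemma hits_pair U1 V1 U2 V2 :
  nonempty_open U1 -> nonempty_open V1 -> nonempty_open U2 -> nonempty_open V2 ->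
  exists k, (0 < k)%nat /\ hits k U1 V1 /\ hits k U2 V2.
Proof.
  intros [O1 [u1 H1]] [O2 [v1 H2]] [O3 [u2 H3]] [O4 [v2 H4]].
  destruct (Hwm (fun p => U1 (fst p) /\ U2 (snd p)) (fun p => V1 (fst p) /\ V2 (snd p)))
    as [k [Hk [p [[Hp1 Hp2] Hp3]]]].
  - now apply open_prod.
  - now apply open_prod.
  - now exists (u1, u2).
  - now exists (v1, v2).
  - rewrite iter_prod_map in Hp3. destruct Hp3 as [Hq1 Hq2].
    exists k. split; [exact Hk|]. split; [exists (fst p) | exists (snd p)]; auto.
Qed.

Lemma hits_large N U V :
  nonempty_open U -> nonempty_open V -> exists n, (N <= n)%nat /\ hits n U V.
Proof.
  revert U V. induction N as [|N IH]; intros U V HU HV.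
  - destruct (hits_pair U V U V) as [n [_ [H _]]]; auto. exists n. split; [lia | exact H].
  - destruct (hits_pair V V V V) as [m [Hm [[v Hv] _]]]; auto.
    destruct HV as [OV _].
    destruct (IH U (fun y => V y /\ V (Nat.iter m T y)) HU) as [n [Hn [u [Hu [Hnu Hmnu]]]]].
    { split; [apply open_and; auto; now apply open_preimage_iter | now exists v]. }
    exists (m + n)%nat. split; [lia|]. exists u. split; [exact Hu|].
    rewrite Nat.iter_add. exact Hmnu.
Qed.

(* With [k] a common hitting time of [(U1, U2)] and [(V1, V2)], the sets
   [U1 ∩ T^-k(U2)] and [V1 ∩ T^-k(V2)] work. *)
Lemma hits_common U1 V1 U2 V2 :
  nonempty_open U1 -> nonempty_open V1 -> nonempty_open U2 -> nonempty_open V2 ->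
  exists U V, nonempty_open U /\ nonempty_open V /\
    forall n, hits n U V -> hits n U1 V1 /\ hits n U2 V2.
Proof.
  intros H1 H2 H3 H4.
  destruct (hits_pair U1 U2 V1 V2) as [k [_ [[u [Hu1 Hu2]] [v [Hv1 Hv2]]]]]; auto.
  destruct H1 as [O1 _], H2 as [O2 _], H3 as [O3 _], H4 as [O4 _].
  exists (fun y => U1 y /\ U2 (Nat.iter k T y)), (fun y => V1 y /\ V2 (Nat.iter k T y)).
  split; [split; [apply open_and; auto; now apply open_preimage_iter | now exists u]|].
  split; [split; [apply open_and; auto; now apply open_preimage_iter | now exists v]|].
  intros n [w [[Hw1 Hw2] [Hnw1 Hnw2]]]. split; [now exists w|].
  exists (Nat.iter k T w). split; [exact Hw2|].
  rewrite <- Nat.iter_add, Nat.add_comm, Nat.iter_add. exact Hnw2.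
Qed.

Lemma hits_finite {A : Type} (l : list A) (U V : A -> X -> Prop) N :
  (forall x, In x l -> nonempty_open (U x) /\ nonempty_open (V x)) ->
  exists n, (N <= n)%nat /\ forall x, In x l -> hits n (U x) (V x).
Proof.
  intros Hl.
  assert (Hcommon : exists U0 V0, nonempty_open U0 /\ nonempty_open V0 /\
            forall n, hits n U0 V0 -> forall x, In x l -> hits n (U x) (V x)).
  { induction l as [|x l IH].
    - destruct Htwo as [x0 _].
      assert (Hfull : nonempty_open (fun _ => True)).
      { split; [intros y _; exists 1; split; [lra | auto] | now exists x0]. }
      exists (fun _ => True), (fun _ => True). split; [exact Hfull|]. split; [exact Hfull|].
      intros n _ y [].
    - destruct IH as [U0 [V0 [HU0 [HV0 H0]]]]; [intros y Hy; apply Hl; now right|].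
      destruct (Hl x (or_introl eq_refl)) as [HUx HVx].
      destruct (hits_common U0 V0 (U x) (V x)) as [U1 [V1 [HU1 [HV1 H1]]]]; auto.
      exists U1, V1. split; [exact HU1|]. split; [exact HV1|].
      intros n Hn y [<-|Hy]; destruct (H1 n Hn) as [Hn0 Hnx]; auto. }
  destruct Hcommon as [U0 [V0 [HU0 [HV0 H0]]]].
  destruct (hits_large N U0 V0 HU0 HV0) as [n [Hn Hhit]]. eauto.
Qed.

Lemma no_isolated_points x e : 0 < e -> exists y, y <> x /\ rho x y < e.
Proof.
  (* If [B(x, e) = {x}], a common hitting time [k] of [(B, B)] and [(B, B(b, rho b x))]
     would make [T^k x] both equal to [x] and different from it. *)
  intros He. apply NNPP. intros Hn.
  assert (Hiso : forall y, rho x y < e -> y = x).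
  { intros y Hy. apply NNPP. intros Hyx. apply Hn. eauto. }
  assert (Hb : exists b, b <> x).
  { destruct Htwo as [a [b Hab]]. destruct (classic (a = x)) as [->|Ha]; eauto. }
  destruct Hb as [b Hb]. pose proof (rho_pos b x Hb) as Hbx.
  assert (Hball : nonempty_open (fun y => rho x y < e)).
  { split; [apply open_ball | exists x; now rewrite rho_refl]. }
  destruct (hits_pair (fun y => rho x y < e) (fun y => rho x y < e)
              (fun y => rho x y < e) (fun y => rho b y < rho b x))
    as [k [_ [[u [Hu Hku]] [v [Hv Hkv]]]]]; auto.
  { split; [apply open_ball | exists b; now rewrite rho_refl]. }
  apply Hiso in Hu, Hv, Hku. subst u v. rewrite Hku in Hkv. lra.
Qed.

Lemma disjoint_subballs B :
  0 < radius B -> exists B0 B1, subball B B0 /\ subball B B1 /\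
    forall y, ~ (in_ball B0 y /\ in_ball B1 y).
Proof.
  intros HB. destruct (no_isolated_points (center B) (radius B) HB) as [y [Hy Hcy]].
  pose proof (rho_pos _ _ Hy) as Hd.
  set (d := rho y (center B)) in Hd.
  assert (Hc : in_ball B (center B)) by (unfold in_ball; now rewrite rho_refl).
  destruct (subball_at B (center B) (fun z => rho (center B) z < d / 2)
              (open_ball _ _) Hc ltac:(cbv beta; rewrite rho_refl; lra)) as [B0 [_ [HB0 H0]]].
  destruct (subball_at B y (fun z => rho y z < d / 2)
              (open_ball _ _) Hcy ltac:(cbv beta; rewrite rho_refl; lra)) as [B1 [_ [HB1 H1]]].
  exists B0, B1. split; [exact HB0|]. split; [exact HB1|].
  intros z [Hz0 Hz1]. apply H0 in Hz0. apply H1 in Hz1.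
  pose proof (rho_tri y z (center B)) as Htri.
  rewrite (rho_sym z (center B)) in Htri. unfold d in *. lra.
Qed.

Variable G : nat -> X.

Definition scheme : Type := (nat -> bool) -> ball.

Definition of_depth (k : nat) (s : scheme) : Prop :=
  forall a, 0 < radius (s a) /\ forall b, agree k a b -> s a = s b.

Definition splits (k : nat) (s : scheme) : Prop :=
  forall a b, agree k a b -> a k <> b k -> forall y, ~ (in_ball (s a) y /\ in_ball (s b) y).

Definition serves (r : requirement) (P : (nat -> bool) -> X -> Prop) : Prop :=
  exists n, (horizon r <= n)%nat /\ forall a y, P a y ->
    rho (Nat.iter (n + fst (demand r a)) T y) (G (snd (demand r a))) < (/2) ^ horizon r.

Definition stage (k : nat) (s s' : scheme) : Prop :=
  (forall a, subball (s a) (s' a)) /\ splits k s' /\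
  ((horizon (enum_req k) <= k)%nat -> serves (enum_req k) (fun a => in_ball (s' a))).

Lemma split_scheme k s :
  of_depth k s -> exists s', of_depth (S k) s' /\ (forall a, subball (s a) (s' a)) /\ splits k s'.
Proof.
  intros Hs.
  assert (Hhalves : forall a, exists p : ball * ball,
             subball (s a) (fst p) /\ subball (s a) (snd p) /\
             forall y, ~ (in_ball (fst p) y /\ in_ball (snd p) y)).
  { intros a. destruct (disjoint_subballs (s a) (proj1 (Hs a))) as [B0 [B1 H]].
    now exists (B0, B1). }
  destruct (prefix_choice k _ Hhalves) as [p [Hp Hpk]].
  { intros a b x Hab. now rewrite (proj2 (Hs a) b Hab). }
  exists (fun a : nat -> bool => if a k then snd (p a) else fst (p a)). split; [|split].
  - intros a. split; [destruct (a k); apply Hp|].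
    intros b Hab. rewrite (Hpk a b) by (apply (agree_le (S k)); auto).
    now rewrite (Hab k) by lia.
  - intros a. destruct (a k); apply Hp.
  - intros a b Hab Hk y. rewrite (Hpk a b Hab). destruct (Hp b) as [_ [_ Hd]].
    destruct (a k), (b k); try congruence; firstorder.
Qed.

(* Weak mixing lets all the finitely many balls of depth [k] be steered at a common time. *)
Lemma shrink_scheme k s (sh : (nat -> bool) -> nat) (g : (nat -> bool) -> X) eps N :
  of_depth k s -> 0 < eps -> (forall a b, agree k a b -> sh a = sh b /\ g a = g b) ->
  exists n, (N <= n)%nat /\ exists s', of_depth k s' /\ (forall a, subball (s a) (s' a)) /\
    forall a y, in_ball (s' a) y -> rho (Nat.iter (n + sh a) T y) (g a) < eps.
Proof.
  intros Hs Heps Hinv.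
  destruct (hits_finite (words k) (fun w => in_ball (s w))
              (fun w y => rho (g w) (Nat.iter (sh w) T y) < eps) N) as [n [Hn Hhit]].
  { intros w _. split.
    - split; [apply open_ball | exists (center (s w))].
      unfold in_ball. rewrite rho_refl. apply Hs.
    - split; [apply (open_preimage_iter (sh w) (fun z => rho (g w) z < eps)), open_ball|].
      (* The image of [T^(sh w)] is dense: it meets the ball at a hitting time [m >= sh w]. *)
      assert (Hfull : nonempty_open (fun _ => True)).
      { split; [intros y _; exists 1; split; [lra | auto] | exists (g w); auto]. }
      assert (Hball : nonempty_open (fun y => rho (g w) y < eps)).
      { split; [apply open_ball | exists (g w); now rewrite rho_refl]. }
      destruct (hits_large (sh w) _ _ Hfull Hball) as [m [Hm [u [_ Hu]]]].
      exists (Nat.iter (m - sh w) T u). rewrite <- Nat.iter_add.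
      now replace (sh w + (m - sh w))%nat with m by lia. }
  exists n. split; [exact Hn|].
  assert (Hsteer : forall a, exists B, subball (s a) B /\
             forall y, in_ball B y -> rho (Nat.iter (n + sh a) T y) (g a) < eps).
  { intros a. destruct (Hhit (truncate k a) (truncate_in_words k a)) as [u [Hu Hnu]].
    pose proof (agree_truncate k a) as Ha.
    rewrite (proj2 (Hs _) a Ha) in Hu. destruct (Hinv _ a Ha) as [-> ->] in Hnu.
    destruct (subball_at (s a) u (fun y => rho (g a) (Nat.iter (sh a) T (Nat.iter n T y)) < eps))
      as [B [_ [HB HBW]]]; auto.
    { apply (open_preimage_iter n (fun z => rho (g a) (Nat.iter (sh a) T z) < eps)).
      apply (open_preimage_iter (sh a) (fun z => rho (g a) z < eps)), open_ball. }
    exists B. split; [exact HB|]. intros y Hy.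
    rewrite rho_sym, Nat.add_comm, Nat.iter_add. auto. }
  destruct (prefix_choice k _ Hsteer) as [s' [Hs' Hs'k]].
  { intros a b B Hab. rewrite (proj2 (Hs a) b Hab). now destruct (Hinv a b Hab) as [-> ->]. }
  exists s'. split; [|split; intros a; apply Hs'].
  intros a. split; [apply Hs'|]. auto.
Qed.

Lemma scheme_step k s : of_depth k s -> exists s', of_depth (S k) s' /\ stage k s s'.
Proof.
  intros Hs. destruct (split_scheme k s Hs) as [s1 [Hs1 [Hsub1 Hsplit1]]].
  unfold stage. set (r := enum_req k).
  destruct (Nat.le_gt_cases (horizon r) k) as [Hr|Hr].
  2: { exists s1. split; [exact Hs1|]. split; [exact Hsub1|]. split; [exact Hsplit1|].
       intros Hr'; lia. }
  destruct (shrink_scheme (S k) s1 (fun a => fst (demand r a)) (fun a => G (snd (demand r a)))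
              ((/2) ^ horizon r) (horizon r) Hs1) as [n [Hn [s2 [Hs2 [Hsub2 Hclose]]]]].
  - apply pow_lt. lra.
  - intros a b Hab. unfold demand.
    rewrite (code_agree a b (horizon r)) by (apply (agree_le (S k)); auto; lia). auto.
  - exists s2. split; [exact Hs2|]. split; [|split].
    + intros a. eapply subball_trans; eauto.
    + intros a b Hab Hk y [Ha Hb]. apply (Hsplit1 a b Hab Hk y).
      split; eapply in_subball; eauto.
    + intros _. exists n. split; [exact Hn | exact Hclose].
Qed.

Lemma cantor_scheme : exists st : nat -> scheme,
  forall k, of_depth k (st k) /\ stage k (st k) (st (S k)) /\ forall a, radius (st k a) <= (/2) ^ k.
Proof.
  destruct Htwo as [x0 _].
  destruct (dependent_choice of_depth stage (fun _ => Ball x0 1)) as [st [Hst0 Hst]].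
  - intros a. simpl. split; [lra | auto].
  - exact scheme_step.
  - exists st. intros k. split; [apply Hst|]. split; [apply Hst|].
    induction k as [|k IH]; intros a.
    + rewrite Hst0. simpl. lra.
    + destruct (Hst k) as [_ [Hsub _]]. destruct (Hsub a) as [_ [_ Hr]].
      specialize (IH a). simpl. lra.
Qed.

Definition hits_targets (f : (nat -> bool) -> X) : Prop :=
  forall d (af : nat -> nat -> bool) (sh t : nat -> nat) eps N,
    (forall i j, (i < d)%nat -> (j < d)%nat -> i <> j -> af i <> af j) -> 0 < eps ->
    exists n, (N <= n)%nat /\ forall i, (i < d)%nat ->
      rho (Nat.iter n T (Nat.iter (sh i) T (f (af i)))) (G (t i)) < eps.

(* Finitely many distinct branches are separated by their codes at a large horizon, so a
   single requirement can prescribe a shift and a target for each of them. *)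
Lemma hits_targets_of_serving f :
  (forall k, (horizon (enum_req k) <= k)%nat -> serves (enum_req k) (fun a y => y = f a)) ->
  hits_targets f.
Proof.
  intros Hserve d af sh t eps N0 Hdist Heps.
  destruct (codes_eventually_distinct af d Hdist) as [L HL].
  destruct (pow_half_eventually_lt eps Heps) as [E HE].
  set (N := Nat.max L (Nat.max E N0)).
  destruct (table_through_injective (fun i => code (af i) N) (fun i => (sh i, t i)) d)
    as [h Hh]; [apply HL; lia|].
  destruct (enum_req_complete N h) as [k [Hk [Hhor Htab]]].
  destruct (Hserve k) as [n [Hn Hclose]]; [lia|].
  exists n. split; [lia|]. intros i Hi.
  specialize (Hclose (af i) (f (af i)) eq_refl). unfold demand in Hclose.
  rewrite Hhor, Htab, Hh in Hclose by (auto using code_lt). cbn [fst snd] in Hclose.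
  rewrite <- Nat.iter_add. specialize (HE N ltac:(lia)). lra.
Qed.

Lemma cantor_embedding : exists f : (nat -> bool) -> X,
  cantor_continuous rho f /\ (forall a b, f a = f b -> a = b) /\ hits_targets f.
Proof.
  destruct cantor_scheme as [st Hst].
  assert (Hpt : forall a, exists y, forall k, in_ball (st k a) y).
  { intros a. apply nested_balls_meet. intros k. apply Hst. }
  destruct (choice _ Hpt) as [f Hf].
  exists f. split; [|split].
  - intros a eps Heps. destruct (pow_half_eventually_lt (eps / 2)) as [k Hk]; [lra|].
    exists k. intros b Hb. destruct (Hst k) as [Hlev [_ Hrad]].
    pose proof (Hf a k) as Ha. pose proof (Hf b k) as Hb'. unfold in_ball in Ha, Hb'.
    rewrite <- (proj2 (Hlev a) b (agree_sym _ _ _ Hb)) in Hb'.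
    pose proof (rho_tri (f a) (center (st k a)) (f b)) as Htri.
    rewrite (rho_sym (f a) (center (st k a))) in Htri.
    specialize (Hk k (le_n k)). specialize (Hrad a). lra.
  - intros a b Hfab. apply NNPP. intros Hab.
    destruct (first_difference a b Hab) as [k [Hagree Hk]].
    destruct (Hst k) as [_ [[_ [Hsplit _]] _]].
    apply (Hsplit a b Hagree Hk (f a)). split; [apply Hf | rewrite Hfab; apply Hf].
  - apply hits_targets_of_serving. intros k Hk.
    destruct (Hst k) as [_ [[_ [_ Hserve]] _]].
    destruct (Hserve Hk) as [n [Hn Hclose]].
    exists n. split; [exact Hn|]. intros a y ->. apply Hclose, Hf.
Qed.

Lemma separated_targets (f : (nat -> bool) -> X) :
  (forall a b, f a = f b -> a = b) -> dense G ->
  forall d, exists D, 0 < D < 1 /\ exists idx : nat -> nat,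
    forall i j, (i < d)%nat -> (j < d)%nat -> i <> j -> 3 * D < rho (G (idx i)) (G (idx j)).
Proof.
  intros Hinj HG d.
  set (z i := f (fun m => Nat.eqb m i)).
  assert (Hz : forall i j, i <> j -> z i <> z j).
  { intros i j Hij E. apply Hinj, (f_equal (fun a => a i)) in E.
    rewrite Nat.eqb_refl in E. symmetry in E. now apply Hij, Nat.eqb_eq. }
  destruct (eventually_pairwise d (fun i j K => (/2) ^ K < rho (z i) (z j))) as [K HK].
  { intros i j _ _ Hij. apply pow_half_eventually_lt, rho_pos, Hz, Hij. }
  pose proof (pow_lt (/2) K ltac:(lra)) as HKpos.
  pose proof (pow_incr (/2) 1 K ltac:(lra)) as HK1. rewrite pow1 in HK1.
  set (D := (/2) ^ K / 6).
  assert (HD : 0 < D) by (unfold D; lra).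
  destruct (choice (fun i j => rho (G j) (z i) < D) (fun i => HG (z i) D HD)) as [idx Hidx].
  exists D. split; [unfold D; lra|]. exists idx. intros i j Hi Hj Hij.
  specialize (HK K (le_n K) i j Hi Hj Hij). pose proof (Hidx i). pose proof (Hidx j).
  pose proof (rho_tri (z i) (G (idx i)) (z j)) as Htri1.
  pose proof (rho_tri (G (idx i)) (G (idx j)) (z j)) as Htri2.
  rewrite (rho_sym (z i) (G (idx i))) in Htri1. unfold D in *. lra.
Qed.

Lemma li_yorke_of_hits (f : (nat -> bool) -> X) d (x : nat -> X) (s : nat -> nat) D
  (idx : nat -> nat) :
  hits_targets f -> 0 < D ->
  (forall i j, (i < d)%nat -> (j < d)%nat -> i <> j -> 3 * D < rho (G (idx i)) (G (idx j))) ->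
  (forall i, (i < d)%nat -> exists a, f a = x i) ->
  (forall i j, (i < d)%nat -> (j < d)%nat -> i <> j -> x i <> x j) ->
  li_yorke_tuple rho T D d (fun i => Nat.iter (s i) T (x i)).
Proof.
  intros Hhits HD Hsep Hx Hdist.
  destruct (choice (fun i a => (i < d)%nat -> f a = x i)) as [af Haf].
  { intros i. destruct (Nat.lt_ge_cases i d) as [Hi|Hi].
    - destruct (Hx i Hi) as [a Ha]. eauto.
    - exists (fun _ => false). lia. }
  assert (Hafd : forall i j, (i < d)%nat -> (j < d)%nat -> i <> j -> af i <> af j).
  { intros i j Hi Hj Hij E. apply (Hdist i j Hi Hj Hij).
    now rewrite <- (Haf i Hi), <- (Haf j Hj), E. }
  split.
  - intros eps Heps N.
    destruct (Hhits d af s (fun _ => O) (eps / 2) N Hafd) as [n [Hn Hclose]]; [lra|].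
    exists n. split; [exact Hn|]. intros i j Hi Hj.
    rewrite <- (Haf i Hi), <- (Haf j Hj).
    pose proof (Hclose i Hi). pose proof (Hclose j Hj).
    pose proof (rho_tri (Nat.iter n T (Nat.iter (s i) T (f (af i)))) (G O)
                        (Nat.iter n T (Nat.iter (s j) T (f (af j))))) as Htri.
    rewrite (rho_sym (G O)) in Htri. lra.
  - exists (2 * D). split; [lra|]. intros N.
    destruct (Hhits d af s idx (D / 2) N Hafd) as [n [Hn Hclose]]; [lra|].
    exists n. split; [exact Hn|]. intros i j Hi Hj Hij.
    rewrite <- (Haf i Hi), <- (Haf j Hj).
    pose proof (Hclose i Hi). pose proof (Hclose j Hj). pose proof (Hsep i j Hi Hj Hij).
    set (yi := Nat.iter n T (Nat.iter (s i) T (f (af i)))) in *.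
    set (yj := Nat.iter n T (Nat.iter (s j) T (f (af j)))) in *.
    pose proof (rho_tri (G (idx i)) yi (G (idx j))) as Htri1.
    pose proof (rho_tri yi yj (G (idx j))).
    rewrite (rho_sym (G (idx i)) yi) in Htri1. lra.
Qed.

Lemma omega_limit_of_hits (f : (nat -> bool) -> X) a y :
  hits_targets f -> dense G -> in_omega_limit rho T (f a) y.
Proof.
  intros Hhits HG eps Heps N.
  destruct (HG y (eps / 2)) as [j Hj]; [lra|].
  destruct (Hhits 1%nat (fun _ => a) (fun _ => O) (fun _ => j) (eps / 2) N)
    as [n [Hn Hclose]]; [lia | lra |].
  exists n. split; [exact Hn|]. specialize (Hclose O ltac:(lia)).
  change (Nat.iter 0 T (f a)) with (f a) in Hclose.
  pose proof (rho_tri (Nat.iter n T (f a)) (G j) y). lra.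
Qed.

End Construction.

Theorem mainTheorem10 (X : Type) (rho : X -> X -> R) (T : X -> X)
  (Hmetric : is_metric rho) (Hcompact : compact_space rho)
  (Htwo : exists a b : X, a <> b)
  (Hcont : continuous_map rho T) (Hwm : weakly_mixing rho T) :
  exists (delta : nat -> R) (M : X -> Prop),
    (forall d : nat, (2 <= d)%nat -> 0 < delta d < 1) /\
    mycielski_set rho M /\
    (forall (d : nat) (x : nat -> X) (s : nat -> nat),
       (2 <= d)%nat ->
       (forall i, (i < d)%nat -> M (x i)) ->
       (forall i j, (i < d)%nat -> (j < d)%nat -> i <> j -> x i <> x j) ->
       li_yorke_tuple rho T (delta d) d (fun i => Nat.iter (s i) T (x i))) /\
    (forall x, M x -> forall y, in_omega_limit rho T x y).
Proof.
  pose proof Htwo as [x0 _].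
  destruct (dense_sequence X rho Hmetric Hcompact x0) as [G HG].
  destruct (cantor_embedding X rho T Hmetric Hcompact Hcont Hwm Htwo G)
    as [f [Hfcont [Hfinj Hfhits]]].
  destruct (choice _ (separated_targets X rho Hmetric G f Hfinj HG)) as [delta Hdelta].
  exists delta, (fun x => exists a, f a = x). split; [|split; [|split]].
  - intros d _. apply Hdelta.
  - exists (fun _ x => exists a, f a = x). split.
    + intros _. exists f. split; [exact Hfcont|]. split; [exact Hfinj|]. tauto.
    + intros x. split; [now exists O | now intros [_ Hx]].
  - intros d x s _ Hx Hdist. destruct (Hdelta d) as [[HD _] [idx Hidx]].
    eapply li_yorke_of_hits; eauto.
  - intros x [a <-] y. eapply omega_limit_of_hits; eauto.
Qed.
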